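(* Let $G$ be a finite undirected graph. Let $K$ be the simplicial complex whose vertices are the nonempty sets $A\subseteq V(G)$ with $N(A)\neq\emptyset$ and $N(N(A))=A$, and whose simplices are the nonempty sets $\{A_1,\dots,A_t\}$ of such vertices with $\bigcap_{i=1}^tA_i\neq\emptyset$ and $N\big(\bigcup_{i=1}^tA_i\big)\neq\emptyset$. Then $K$ collapses onto its subcomplex $\mathcal{L}o(G)$ (the order complex of the vertex set of $K$ ordered by inclusion). (Equivalently, $K$ is the atom crosscut complex of the lattice obtained from the opposite of the face poset of $\mathrm{Hom}(K_2,G)$ by adjoining a minimum and a maximum, with the atom $(A,N(A))$ indexed by $A$.)
   Context: For $S\subseteq V(G)$, $N(S)=\bigcap_{v\in S}N(v)$ is the set of common neighbors of vertices of $S$. The neighborhood complex $\mathcal N(G)$ has simplices the nonempty $S\subseteq V(G)$ with $N(S)\neq\emptyset$; the Lovász complex $\mathcal{L}o(G)$ is the order complex of the poset $\{N(S):S\text{ a simplex of }\mathcal N(G)\}$ ordered by inclusion (this poset equals the vertex set of $K$). $\mathrm{Hom}(K_2,G)$ is the subcomplex of $\Delta^{V(G)}\times\Delta^{V(G)}$ consisting of the cells $\sigma\times\tau$ with $\sigma,\tau$ nonempty subsets of $V(G)$ and $\sigma\times\tau\subseteq E(G)$ (i.e. $(x,y)\in E(G)$ for all $x\in\sigma$, $y\in\tau$). *)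

From Stdlib Require Import Relation_Operators.
From mathcomp Require Import all_boot.
Set Implicit Arguments. Unset Strict Implicit. Unset Printing Implicit Defensive.

(** Finite abstract simplicial complexes on a finite vertex type V are
    represented by their set of (nonempty) faces : {set {set V}}. *)

Definition elem_collapse (V : finType) (K L : {set {set V}}) : Prop :=
  exists sigma tau : {set V},
    [/\ sigma \in K, tau \in K, sigma \proper tau,
        (forall rho, rho \in K -> sigma \subset rho -> rho = sigma \/ rho = tau)
      & L = K :\: [set sigma; tau]].

Definition collapses (V : finType) (K L : {set {set V}}) : Prop :=
  clos_refl_trans_1n _ (@elem_collapse V) K L.

Section Graph.
Variables (T : finType) (e : rel T).

Definition Nb (S : {set T}) : {set T} := [set y | [forall x in S, e x y]].

Definition nbhd_complex : {set {set T}} :=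
  [set S : {set T} | (S != set0) && (Nb S != set0)].

Definition lovasz_poset : {set {set T}} := [set Nb S | S in nbhd_complex].

Definition lovasz_complex : {set {set {set T}}} :=
  [set F : {set {set T}} | [&& F != set0, F \subset lovasz_poset &
     [forall A in F, forall B in F, (A \subset B) || (B \subset A)]]].

Definition K_vertices : {set {set T}} :=
  [set A : {set T} | [&& A != set0, Nb A != set0 & Nb (Nb A) == A]].

Definition K_complex : {set {set {set T}}} :=
  [set F : {set {set T}} | [&& F != set0, F \subset K_vertices,
     \bigcap_(A in F) A != set0 & Nb (\bigcup_(A in F) A) != set0]].

End Graph.

(* Let F be a face of K that is not a chain, U the union of its members that are
   incomparable with some other member, and y = N(N(U)). Then y is a vertex of K
   comparable with every member of F: a member comparable with all incomparable
   ones either lies below one of them, hence below y, or contains U, hence y, as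
   it is N(N)-closed. So toggling y in F is an involution on the non-chain faces
   of K, preserving y. From the smaller face of a pair to any coface other than
   its partner, the weight (|y|, |F \ y|) strictly increases, so removing pairs
   in order of decreasing weight performs elementary collapses down to the
   chains, that is, to Lo(G). *)

From Stdlib Require Import Relation_Operators.
From mathcomp Require Import all_boot.
Set Implicit Arguments. Unset Strict Implicit. Unset Printing Implicit Defensive.

Section AcyclicMatching.
Variables (V : finType) (L : {set {set V}}).
Variables (m : {set V} -> {set V}) (phi : {set V} -> nat).

Definition acyclic_matching (K : {set {set V}}) : Prop :=
  [/\ L \subset K,
      {in K :\: L, forall F,
         [/\ m F \in K :\: L, m (m F) = F, phi (m F) = phi F
           & (F \proper m F) || (m F \proper F)]}
    & {in K :\: L, forall s : {set V}, s \proper m s -> forall r, r \in K ->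
         s \proper r -> r != m s -> r \notin L /\ phi s < phi r}].

Lemma elem_collapse_matched K s :
  acyclic_matching K -> s \in K :\: L -> s \proper m s ->
  {in K :\: L, forall r, phi r <= phi s} ->
  elem_collapse K (K :\: [set s; m s]).
Proof.
case=> _ matched up sKL sms phi_max; have [msKL _ _ _] := matched s sKL.
exists s, (m s); split=> //; [by case/setDP: sKL | by case/setDP: msKL |].
move=> r rK sr; case: (eqVneq r s) => [|rs]; first by left.
case: (eqVneq r (m s)) => [|rms]; first by right.
have sr' : s \proper r by rewrite properEneq eq_sym rs.
have [rL lt_sr] := up s sKL sms r rK sr' rms.
by have := phi_max r; rewrite inE rL rK leqNgt lt_sr => /(_ isT).
Qed.

Lemma acyclic_matching_remove K s :
  acyclic_matching K -> s \in K :\: L -> acyclic_matching (K :\: [set s; m s]).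
Proof.
case=> LK matched up sKL; have [msKL mms _ _] := matched s sKL.
have removed_sub F : F \in (K :\: [set s; m s]) :\: L -> F \in K :\: L.
  by case/setDP=> /setDP[FK _] FL; rewrite inE FL FK.
split.
- apply/subsetP=> F FL; rewrite inE (subsetP LK) // andbT !inE.
  by apply/norP; split; apply: contraTneq FL => ->; [case/setDP: sKL | case/setDP: msKL].
- move=> F FKL; have [mFKL mmF phimF prop] := matched F (removed_sub F FKL).
  move: FKL => /setDP[/setDP[_ Fsms] _]; split=> //.
  case/setDP: mFKL => mFK mFL; rewrite !inE mFL mFK andbT /=.
  apply: contra Fsms => /orP[] /eqP mFE; rewrite !inE -mmF mFE ?mms eqxx ?orbT //.
- move=> s' /removed_sub s'KL s'ms r /setDP[rK _]; exact: up.
Qed.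

Lemma acyclic_matching_collapses K : acyclic_matching K -> collapses K L.
Proof.
elim: {K}_.+1 {-2}K (ltnSn #|K|) => // n IH K ltKn matchK.
have [LK matched _] := matchK.
have [KL | /subsetPn[F0 F0K F0L]] := boolP (K \subset L).
  have -> : K = L by apply/eqP; rewrite eqEsubset KL LK.
  exact: rt1n_refl.
have F0KL : F0 \in K :\: L by rewrite inE F0L.
have [F FKL Fmax] := arg_maxnP phi F0KL.
have [mFKL mmF phimF FmF] := matched F FKL.
have [s [sKL sms phis]] : exists s, [/\ s \in K :\: L, s \proper m s & phi s = phi F].
  by case/orP: FmF; [exists F | exists (m F); rewrite mmF].
have phi_max : {in K :\: L, forall r, phi r <= phi s}.
  by move=> r /Fmax; rewrite phis.
apply: (@rt1n_trans _ _ _ (K :\: [set s; m s])); first exact: elem_collapse_matched.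
apply: IH (acyclic_matching_remove matchK sKL); rewrite -ltnS; apply: leq_trans ltKn.
rewrite ltnS proper_card // properE subsetDl; apply/subsetPn; exists s.
  by case/setDP: sKL.
by rewrite !inE eqxx.
Qed.

End AcyclicMatching.

Lemma lex_ltn n a a' b b' : b < n -> a < a' -> a * n + b < a' * n + b'.
Proof.
move=> lt_bn lt_aa'; apply: leq_trans (leq_addr b' _).
have lt_an : a * n + b < a.+1 * n by rewrite mulSnr ltn_add2l.
by apply: leq_trans lt_an _; rewrite leq_mul2r lt_aa' orbT.
Qed.

Section Toggle.
Variable X : finType.
Implicit Types (x : X) (A : {set X}).

Definition toggle x A := if x \in A then A :\ x else x |: A.

Lemma toggleK x : involutive (toggle x).
Proof.
move=> A; rewrite /toggle; have [xA | xA] := boolP (x \in A).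
  by rewrite setD11 setD1K.
by rewrite setU11 setU1K.
Qed.

Lemma toggle_setD1 x A : toggle x A :\ x = A :\ x.
Proof. by rewrite /toggle; case: ifP => _; apply/setP=> y; rewrite !inE; case: eqP. Qed.

Lemma proper_toggle x A : (A \proper toggle x A) || (toggle x A \proper A).
Proof.
rewrite /toggle; case: ifP => xA; first by rewrite properD1 ?orbT.
by rewrite properUr // sub1set xA.
Qed.

End Toggle.

Section Incomparables.
Variable X : finType.
Implicit Types (A B : {set X}) (F G : {set {set X}}).

Definition comparable A B := (A \subset B) || (B \subset A).

Definition incomparables F := [set A in F | [exists B in F, ~~ comparable A B]].

Lemma incomparables_sub F : incomparables F \subset F.
Proof. by apply/subsetP=> A; rewrite inE => /andP[]. Qed.

Lemma incomparables_mono F G : F \subset G -> incomparables F \subset incomparables G.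
Proof.
move=> FG; apply/subsetP=> A; rewrite !inE => /andP[AF /existsP[B /andP[BF nAB]]].
by rewrite (subsetP FG) //=; apply/existsP; exists B; rewrite (subsetP FG).
Qed.

Lemma incomparables_eq0 F :
  (incomparables F == set0) = [forall A in F, forall B in F, comparable A B].
Proof.
apply/eqP/forall_inP=> [F0 A AF | cF]; last first.
  by apply/setP=> A; rewrite !inE; apply/andP=> -[/cF /forall_inP cA /exists_inP[B /cA ->]].
apply/forall_inP=> B BF; apply/negPn/negP=> nAB.
suff: A \in incomparables F by rewrite F0 inE.
by rewrite inE AF; apply/exists_inP; exists B.
Qed.

Lemma comparableC A B : comparable A B = comparable B A.
Proof. exact: orbC. Qed.

Lemma incomparables_setU1 F B :
  {in F, forall A, comparable B A} -> incomparables (B |: F) = incomparables F.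
Proof.
move=> cBF; have cBBF : {in B |: F, forall A, comparable B A}.
  by move=> A /setU1P[-> | /cBF //]; rewrite /comparable subxx.
have no_incomparable G : {in G, forall A, comparable B A} ->
    [exists A in G, ~~ comparable B A] = false.
  by move=> cBG; apply/exists_inP=> -[A /cBG ->].
apply/setP=> A; rewrite !inE; have [-> | nAB] := eqVneq A B.
  by rewrite !no_incomparable ?andbF.
apply/andP/andP=> -[AF /exists_inP[C CF nAC]]; split=> //; apply/exists_inP; exists C => //.
- by case/setU1P: CF nAC => [-> | //]; rewrite comparableC cBF.
- by rewrite inE CF orbT.
Qed.

Lemma incomparables_toggle F B :
  {in F, forall A, comparable B A} -> incomparables (toggle B F) = incomparables F.
Proof.
move=> cBF; rewrite /toggle; case: ifPn => BF; last exact: incomparables_setU1.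
by rewrite -{2}(setD1K BF) incomparables_setU1 // => A /setD1P[_ /cBF].
Qed.

Lemma chain_bigcup F : F != set0 -> {in F &, forall A B, comparable A B} ->
  exists2 M, M \in F & \bigcup_(A in F) A = M.
Proof.
case/set0Pn=> A0 A0F chainF; have [M MF Mmax] := arg_maxnP (fun A => #|A|) A0F.
exists M => //; apply/eqP; rewrite eqEsubset (bigcup_sup M MF) andbT.
apply/bigcupsP=> A AF; case/orP: (chainF A M AF MF) => // MA.
by have /eqP <- : M == A by rewrite eqEcard MA; apply: Mmax.
Qed.

Lemma chain_bigcap F : F != set0 -> {in F &, forall A B, comparable A B} ->
  exists2 M, M \in F & \bigcap_(A in F) A = M.
Proof.
case/set0Pn=> A0 A0F chainF; have [M MF Mmin] := arg_minnP (fun A => #|A|) A0F.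
exists M => //; apply/eqP; rewrite eqEsubset (bigcap_inf M MF) /=.
apply/bigcapsP=> A AF; case/orP: (chainF M A MF AF) => // AM.
by have /eqP -> : A == M by rewrite eqEcard AM; apply: Mmin.
Qed.

End Incomparables.

Section Graph.
Variables (T : finType) (e : rel T).
Hypothesis e_sym : symmetric e.
Implicit Types (A B : {set T}) (F G : {set {set T}}).

Lemma NbS A B : A \subset B -> Nb e B \subset Nb e A.
Proof.
move=> AB; apply/subsetP=> y; rewrite !inE => /forall_inP eBy.
by apply/forall_inP=> x /(subsetP AB); apply: eBy.
Qed.

Lemma sub_Nb2 A : A \subset Nb e (Nb e A).
Proof.
apply/subsetP=> x xA; rewrite inE; apply/forall_inP=> y.
by rewrite inE e_sym => /forall_inP; apply.
Qed.

Lemma Nb3 A : Nb e (Nb e (Nb e A)) = Nb e A.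
Proof. by apply/eqP; rewrite eqEsubset NbS ?sub_Nb2. Qed.

Lemma Nb2S A B : A \subset B -> Nb e (Nb e A) \subset Nb e (Nb e B).
Proof. by move=> AB; apply/NbS/NbS. Qed.

Lemma K_vertex_Nb2 A : A \in K_vertices e -> Nb e (Nb e A) = A.
Proof. by rewrite inE => /and3P[_ _ /eqP]. Qed.

Lemma K_complex_vertices F : F \in K_complex e -> F \subset K_vertices e.
Proof. by rewrite inE => /and4P[]. Qed.

Lemma K_complexS F G : F \in K_complex e -> G \subset F -> G != set0 ->
  G \in K_complex e.
Proof.
rewrite !inE => /and4P[_ FK capF cupF] GF ->; rewrite (subset_trans GF FK) /=.
apply/andP; split; [apply: subset_neq0 capF | apply: subset_neq0 cupF; apply: NbS].
  by apply/bigcapsP=> A AG; apply/bigcap_inf/(subsetP GF).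
by apply/bigcupsP=> A AG; apply: bigcup_sup; apply: (subsetP GF).
Qed.

Lemma lovasz_posetE : lovasz_poset e = K_vertices e.
Proof.
apply/setP=> A; apply/imsetP/idP => [[S] | AK].
  rewrite inE => /andP[S0 NS0] ->.
  by rewrite inE NS0 Nb3 eqxx andbT (subset_neq0 (sub_Nb2 S) S0).
exists (Nb e A); last by rewrite K_vertex_Nb2.
by rewrite inE K_vertex_Nb2 //; move: AK; rewrite inE => /and3P[-> -> _].
Qed.

Lemma lovasz_complexE :
  lovasz_complex e = [set F in K_complex e | incomparables F == set0].
Proof.
apply/setP=> F; rewrite !inE lovasz_posetE incomparables_eq0.
apply/and3P/andP=> [[F0 FK chainF] | [/and4P[F0 FK _ _] chainF]]; last by [].
have chainF' : {in F &, forall A B, comparable A B}.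
  by move=> A B AF BF; move/forall_inP/(_ A AF)/forall_inP/(_ B BF): chainF.
split=> //; rewrite F0 FK /=.
have [m mF ->] := chain_bigcap F0 chainF'; have [M MF ->] := chain_bigcup F0 chainF'.
by move: (subsetP FK m mF) (subsetP FK M MF); rewrite !inE => /and3P[-> _ _] /and3P[].
Qed.

Definition pivot F := Nb e (Nb e (\bigcup_(A in incomparables F) A)).

Definition pivot_toggle F := toggle (pivot F) F.

Section Pivot.
Variable F : {set {set T}}.
Hypotheses (FK : F \in K_complex e) (incF : incomparables F != set0).

Lemma sub_pivot A : A \in incomparables F -> A \subset pivot F.
Proof. by move=> AF; apply: subset_trans (sub_Nb2 _); apply: bigcup_sup. Qed.

Lemma comparable_pivot B : B \in F -> comparable (pivot F) B.
Proof.
move=> BF; rewrite /comparable.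
have [/sub_pivot -> | BnotF] := boolP (B \in incomparables F); first by rewrite orbT.
have cB A : A \in incomparables F -> comparable B A.
  move=> AF; move: BnotF; rewrite inE BF /= negb_exists => /forallP/(_ A).
  by rewrite (subsetP (incomparables_sub F)) //= negbK.
have [/exists_inP[A AF BA] | /exists_inP BnotA] :=
  boolP [exists A in incomparables F, B \subset A].
  by rewrite (subset_trans BA (sub_pivot AF)) orbT.
suff UB : \bigcup_(A in incomparables F) A \subset B.
  by rewrite -(K_vertex_Nb2 (subsetP (K_complex_vertices FK) B BF)) Nb2S.
by apply/bigcupsP=> A AF; case/orP: (cB A AF) => // BA; case: BnotA; exists A.
Qed.

Lemma pivot_notin_incomparables : pivot F \notin incomparables F.
Proof.
by rewrite inE; apply/andP=> -[_ /exists_inP[B /comparable_pivot ->]].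
Qed.

Lemma bigcup_incomparables_sub :
  \bigcup_(A in incomparables F) A \subset \bigcup_(A in F) A.
Proof.
by apply/bigcupsP=> A /(subsetP (incomparables_sub F)) AF; apply: bigcup_sup.
Qed.

Lemma pivot_vertex : pivot F \in K_vertices e.
Proof.
have [A AF] := set0Pn _ incF; have AK := subsetP (K_complex_vertices FK) A
  (subsetP (incomparables_sub F) A AF).
move: AK FK; rewrite !inE /pivot Nb3 eqxx andbT => /and3P[A0 _ _] /and4P[_ _ _ cupF].
rewrite (subset_neq0 (sub_pivot AF) A0) /=.
by apply: subset_neq0 cupF; apply/NbS/bigcup_incomparables_sub.
Qed.

Lemma incomparables_pivot_toggle : incomparables (pivot_toggle F) = incomparables F.
Proof. exact/incomparables_toggle/comparable_pivot. Qed.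

Lemma pivot_pivot_toggle : pivot (pivot_toggle F) = pivot F.
Proof. by rewrite /pivot incomparables_pivot_toggle. Qed.

Lemma pivot_toggle_K : pivot_toggle F \in K_complex e.
Proof.
have [A AF] := set0Pn _ incF; have AinF := subsetP (incomparables_sub F) A AF.
rewrite /pivot_toggle /toggle; case: ifPn => pivotF.
  apply: K_complexS FK (subD1set _ _) _; apply/set0Pn; exists A; rewrite inE AinF andbT.
  by rewrite inE; apply: contraNneq pivot_notin_incomparables => <-.
move: FK; rewrite !inE => /and4P[_ FV capF cupF].
rewrite subUset sub1set pivot_vertex FV /= big_setU1 //= big_setU1 //=.
apply/and3P; split.
- by apply/set0Pn; exists (pivot F); rewrite setU11.
- by rewrite (setIidPr _) // (subset_trans (bigcap_inf A AinF) (sub_pivot AF)).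
apply: subset_neq0 cupF; rewrite -Nb3; apply: NbS.
by rewrite subUset sub_Nb2 andbT; apply/Nb2S/bigcup_incomparables_sub.
Qed.

End Pivot.

(* The pair (|pivot F|, |F :\ pivot F|) in lexicographic order, as #|F| <= #|{set T}|. *)
Definition pivot_weight F := #|pivot F| * (#|{set T}|).+1 + #|F :\ pivot F|.

Lemma K_complexD_lovasz F :
  (F \in K_complex e :\: lovasz_complex e) =
  (F \in K_complex e) && (incomparables F != set0).
Proof. by rewrite inE lovasz_complexE inE negb_and andbC; case: (F \in _). Qed.

Lemma pivot_weight_lt (s r : {set {set T}}) :
  s \proper pivot_toggle s -> s \proper r -> r != pivot_toggle s ->
  pivot_weight s < pivot_weight r.
Proof.
move=> s_toggle sr r_toggle.
have pivot_s : pivot s \notin s.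
  apply: contraTN s_toggle => ys.
  by rewrite /pivot_toggle /toggle ys properE subD1set andbF.
have toggleE : pivot_toggle s = pivot s |: s.
  by rewrite /pivot_toggle /toggle (negbTE pivot_s).
have setD1_notin G : pivot s \notin G -> G :\ pivot s = G.
  by move=> yG; apply/setDidPl; rewrite disjoint_sym disjoints1.
have sub_pivots : pivot s \subset pivot r.
  apply/Nb2S/bigcupsP=> A As; apply: bigcup_sup.
  exact: subsetP (incomparables_mono (proper_sub sr)) A As.
rewrite /pivot_weight setD1_notin //.
have [pivotE | pivot_neq] := eqVneq (pivot r) (pivot s).
  rewrite pivotE ltn_add2l proper_card // properEneq; apply/andP; split.
    apply: contra_neq r_toggle => srE; have [yr | yr] := boolP (pivot s \in r).
      by rewrite toggleE {2}srE setD1K.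
    by move: sr; rewrite srE setD1_notin // properxx.
  apply/subsetP=> A As; rewrite inE (subsetP (proper_sub sr)) // andbT.
  by rewrite inE; apply: contraTneq As => ->.
apply: lex_ltn; first by rewrite ltnS max_card.
by apply: proper_card; rewrite properEneq eq_sym pivot_neq sub_pivots.
Qed.

Lemma pivot_acyclic_matching :
  acyclic_matching (lovasz_complex e) pivot_toggle pivot_weight (K_complex e).
Proof.
split.
- by apply/subsetP=> F; rewrite lovasz_complexE inE => /andP[].
- move=> F; rewrite !K_complexD_lovasz => /andP[FK incF].
  rewrite pivot_toggle_K // incomparables_pivot_toggle //.
  split=> //; last exact: proper_toggle.
    by rewrite /pivot_toggle pivot_pivot_toggle // toggleK.
  by rewrite /pivot_weight pivot_pivot_toggle // toggle_setD1.
move=> s; rewrite K_complexD_lovasz => /andP[_ incs] s_toggle r rK sr r_toggle.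
split; last exact: pivot_weight_lt.
rewrite lovasz_complexE inE rK /=; apply: subset_neq0 incs.
exact/incomparables_mono/proper_sub.
Qed.

End Graph.

Theorem mainTheorem7 (T : finType) (e : rel T) (e_sym : symmetric e) :
  collapses (K_complex e) (lovasz_complex e).
Proof. exact: acyclic_matching_collapses (pivot_acyclic_matching e_sym). Qed.
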